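(* Let $(L,\wedge,\vee,0,1)$ be a bounded lattice. Then its additive Nakano mosaic $(L,\boxplus,0)$, where $x\boxplus y:=\{z\in L\mid x\vee y=x\vee z=z\vee y\}$, is an L-mosaic.
   Context: For a multioperation $\boxplus:A\times A\to\wp(A)$ and subsets $X,Y$, $X\boxplus Y:=\bigcup_{x\in X,y\in Y}x\boxplus y$. A commutative mosaic $(A,\boxplus,e)$: $x\boxplus y=y\boxplus x$, $e\boxplus x=\{x\}$ for all $x$, and for some endofunction $\rho$, $z\in x\boxplus y$ implies $x\in z\boxplus\rho(y)$ and $y\in\rho(x)\boxplus z$. An L-mosaic is a commutative mosaic $(A,\boxplus,0)$ such that: (Lms1) $0,x\in x\boxplus x$ for all $x$; (Lms2) $(x\boxplus x)\boxplus(x\boxplus x)=x\boxplus x$ for all $x$; (Lms3) $(x\boxplus(x\boxplus y))\cap((x\boxplus y)\boxplus y)\subseteq x\boxplus y$ for all $x,y$; (Lms4) for all $x,y$ there is a unique $z\in x\boxplus y$ with $x,y\in z\boxplus z$. *)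

From HB Require Import structures.
From mathcomp Require Import all_boot all_order.
Set Implicit Arguments. Unset Strict Implicit. Unset Printing Implicit Defensive.
Import Order.TTheory.

(* Subsets of A are predicates A -> Prop. A multioperation A x A -> P(A) is
   [m : A -> A -> (A -> Prop)]; [m x y z] means z \in x (+) y. *)
Definition multiop (A : Type) := A -> A -> A -> Prop.

Definition mlift (A : Type) (m : multiop A) (X Y : A -> Prop) : A -> Prop :=
  fun z => exists x y, X x /\ Y y /\ m x y z.

Definition sing (A : Type) (a : A) : A -> Prop := fun z => z = a.

Definition commutative_mosaic (A : Type) (m : multiop A) (e : A) : Prop :=
  (forall x y z, m x y z <-> m y x z) /\
  (forall x z, m e x z <-> z = x) /\
  (exists rho : A -> A, forall x y z,
      m x y z -> m z (rho y) x /\ m (rho x) z y).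

Definition L_mosaic (A : Type) (m : multiop A) (zero : A) : Prop :=
  commutative_mosaic m zero /\
  (forall x, m x x zero /\ m x x x) /\
  (forall x z, mlift m (m x x) (m x x) z <-> m x x z) /\
  (forall x y z, mlift m (sing x) (m x y) z -> mlift m (m x y) (sing y) z ->
      m x y z) /\
  (forall x y, exists z, (m x y z /\ m z z x /\ m z z y) /\
      forall z', m x y z' /\ m z' z' x /\ m z' z' y -> z' = z).

Definition nakano_add (d : Order.disp_t) (L : latticeType d) : multiop L :=
  fun x y z => (x `|` y = x `|` z)%O /\ (x `|` z = z `|` y)%O.

From mathcomp Require Import all_boot all_order.
From Stdlib Require Import Setoid.
Import Order.TTheory.
Open Scope order_scope.

(* Order-theoretically, z \in x (+) y says that each of x, y, z lies below the
   join of the other two.  This condition is symmetric in x, y, z (so rho = id),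
   x (+) x is the principal ideal of x, and the axioms reduce to join
   inequalities; the element required by Lms4 is x `|` y. *)

Section NakanoAdd.
Variables (d : Order.disp_t) (L : latticeType d).
Implicit Types x y z : L.

Local Notation nak := (@nakano_add d L).

Lemma nakano_addE x y z :
  nak x y z <-> [/\ z <= x `|` y, x <= y `|` z & y <= x `|` z].
Proof.
split=> [[xy_xz xz_zy] | [zle xle yle]].
  by rewrite xy_xz leUr joinC -xz_zy leUl -xy_xz leUr.
by split; apply/le_anti; rewrite !leUx ?leUl ?leUr ?zle ?yle 1?joinC ?xle.
Qed.

Lemma nakano_addC x y z : nak x y z <-> nak y x z.
Proof. by rewrite !nakano_addE (joinC x y); split=> -[]. Qed.

Lemma nakano_add_sym x y z : nak x y z -> nak z y x.
Proof.
by rewrite !nakano_addE [y `|` z]joinC [y `|` x]joinC [z `|` x]joinC; case.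
Qed.

Lemma nakano_add_diag x z : nak x x z <-> z <= x.
Proof.
rewrite nakano_addE joinxx.
by split=> [[] // | zx]; split; rewrite ?leUl.
Qed.

Lemma nakano_add_diag_lift x z :
  mlift nak (nak x x) (nak x x) z <-> nak x x z.
Proof.
split=> [[a [b [/nakano_add_diag ax [/nakano_add_diag bx /nakano_addE [zab _ _]]]]]
        | xxz].
  by apply/nakano_add_diag; rewrite (le_trans zab) // leUx ax bx.
by exists x, x; split; [|split]; rewrite // nakano_add_diag.
Qed.

Lemma nakano_add_lift_inter x y z :
  mlift nak (sing x) (nak x y) z -> mlift nak (nak x y) (sing y) z -> nak x y z.
Proof.
move=> [_ [w [-> [/nakano_addE [w_xy _ y_xw] /nakano_addE [z_xw _ w_xz]]]]].
move=> [w' [_ [/nakano_addE [_ x_yw' _] [-> /nakano_addE [_ w'_yz _]]]]].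
apply/nakano_addE; split.
- by rewrite (le_trans z_xw) // leUx leUl w_xy.
- by rewrite (le_trans x_yw') // leUx leUl w'_yz.
- by rewrite (le_trans y_xw) // leUx leUl w_xz.
Qed.

Lemma nakano_add_join_unique x y z :
  nak x y z /\ nak z z x /\ nak z z y <-> z = x `|` y.
Proof.
rewrite !nakano_add_diag; split=> [[/nakano_addE [zle _ _] [xz yz]] | ->].
  by apply/le_anti; rewrite zle leUx xz yz.
split; last by rewrite leUl leUr.
by apply/nakano_addE; rewrite lexx joinCA joinxx joinA joinxx leUl leUr.
Qed.

End NakanoAdd.

Lemma nakano_add_commutative_mosaic (d : Order.disp_t) (L : bLatticeType d) :
  commutative_mosaic (@nakano_add d L) \bot.
Proof.
split; [exact: nakano_addC | split].
- move=> x z; rewrite nakano_addE !join0x.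
  split=> [[zx _ xz] | ->]; first exact/le_anti/andP.
  by rewrite le0x lexx.
- exists id => x y z xyz; split; first exact: nakano_add_sym xyz.
  exact/nakano_addC/nakano_add_sym/nakano_addC.
Qed.

Theorem mainTheorem8 (d : Order.disp_t) (L : tbLatticeType d) :
  L_mosaic (@nakano_add d L) (\bot%O : L).
Proof.
split; first exact: nakano_add_commutative_mosaic.
split; first by move=> x; rewrite !nakano_add_diag le0x lexx.
split; first exact: nakano_add_diag_lift.
split; first exact: nakano_add_lift_inter.
move=> x y; exists (x `|` y); split; first exact/nakano_add_join_unique.
by move=> z /nakano_add_join_unique.
Qed.
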